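(* Let $r\ge2$ and let $V^\star\in\mathcal V_r$ be nonempty, with $V$ its linear span and $d=\dim V$. Then for every $\vec k\in V^\star\cap\mathbb Z^{r-1}$, $\alpha(\vec k)\le 2^{r-d-1}$.
   Context: For $\vec k=(k_1,\ldots,k_{r-1})\in\mathbb R^{r-1}$ set $k_0=k_r=0$ and, for $\mathbf S\subset\{0,\ldots,r-1\}$, $k_{\mathbf S}=\sum_{j\in\mathbf S}(k_{j+1}-k_j)$. $\mathcal M_r$ is the set of equivalence classes of subsets of $\{0,\ldots,r-1\}$ under $\mathbf S\sim\{0,\ldots,r-1\}\setminus\mathbf S$ (the condition $k_{\mathbf S}=0$ depends only on the class since $k_{\mathbf S^c}=-k_{\mathbf S}$). $\alpha(\vec k)=\#\{[\mathbf S]\in\mathcal M_r:k_{\mathbf S}=0\}$. For $S\subset\mathcal M_r$, $\ker(M_S)=\{\vec k\in\mathbb R^{r-1}:k_{\mathbf S}=0\ \forall[\mathbf S]\in S\}$ and $\ker(M_S)^\star=\ker(M_S)\setminus\bigcup_{S_1\subset\mathcal M_r,\,S_1\supsetneq S}\ker(M_{S_1})$; $\mathcal V_r=\{\ker(M_S)^\star:S\subset\mathcal M_r\}$, which partitions $\mathbb R^{r-1}$. *)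

From HB Require Import structures.
From mathcomp Require Import all_boot all_order all_algebra.
From mathcomp Require Import reals.
Set Implicit Arguments. Unset Strict Implicit. Unset Printing Implicit Defensive.
Import Order.TTheory GRing.Theory Num.Theory.
Local Open Scope ring_scope.

Section Defs.
Variables (R : realType) (r : nat).

(* k_j for j = 0..r, with k_0 = k_r = 0 and k_j = k 0 (j-1) for 1 <= j <= r-1 *)
Definition kcoord (k : 'rV[R]_(r.-1)) (j : nat) : R :=
  if j is j'.+1 then
    (if insub j' is Some i then k ord0 i else 0)
  else 0.

Definition kS (k : 'rV[R]_(r.-1)) (S : {set 'I_r}) : R :=
  \sum_(j in S) (kcoord k j.+1 - kcoord k j).

Definition mclass (S : {set 'I_r}) : {set {set 'I_r}} := [set S; ~: S].

Definition Mr : {set {set {set 'I_r}}} := [set mclass S | S : {set 'I_r}].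

(* k_[S] = 0 (independent of the representative) *)
Definition class_zero (k : 'rV[R]_(r.-1)) (C : {set {set 'I_r}}) : bool :=
  [exists S in C, kS k S == 0].

Definition alpha (k : 'rV[R]_(r.-1)) : nat :=
  #|[set C in Mr | class_zero k C]|.

Definition kerM (S : {set {set {set 'I_r}}}) (k : 'rV[R]_(r.-1)) : bool :=
  [forall C in S, class_zero k C].

Definition kerMstar (S : {set {set {set 'I_r}}}) (k : 'rV[R]_(r.-1)) : bool :=
  kerM S k &&
  ~~ [exists S1 : {set {set {set 'I_r}}},
        [&& S1 \subset Mr, S \proper S1 & kerM S1 k]].

End Defs.

Definition is_linear_span (K : fieldType) (vT : vectType K)
  (A : vT -> Prop) (U : {vspace vT}) : Prop :=
  (forall v, A v -> v \in U) /\
  (forall W : {vspace vT}, (forall v, A v -> v \in W) -> (U <= W)%VS).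

From Pilot Require Import Defs.
From HB Require Import structures.
From mathcomp Require Import all_boot all_order all_algebra.
From mathcomp Require Import reals zify.
Set Implicit Arguments. Unset Strict Implicit. Unset Printing Implicit Defensive.
Import Order.TTheory GRing.Theory Num.Theory.
Local Open Scope ring_scope.

(* The map [D : k |-> (k_(j+1) - k_j)_j] is linear and injective, and [k_S] is
   the scalar product of [D k] with the indicator vector of [S].  If [k] lies in
   [ker(M_S)^star], maximality of [S] forces every class vanishing at [k] into
   [S], so the indicators of both representatives of such a class are
   orthogonal to [D V], a space of dimension [d].  A subspace of dimension
   [r - d] contains at most [2^(r-d)] vectors with 0/1 entries (Odlyzko), and
   each class accounts for two of them. *)

Definition indrow (F : fieldType) m (T : {set 'I_m}) : 'rV[F]_m :=
  \row_j (j \in T)%:R.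

Lemma indrow_inj (F : fieldType) m : injective (@indrow F m).
Proof.
move=> T1 T2 /rowP E; apply/setP => j; have := E j; rewrite !mxE.
by case: (j \in T1); case: (j \in T2) => //= /eqP; rewrite ?oner_eq0 // eq_sym oner_eq0.
Qed.

(* Pick [\rank A] columns on which [row_base A] is free: a vector of the row
   space of [A] is determined by these coordinates, hence so is [T]. *)
Lemma card_indrow_submx (F : fieldType) m n (A : 'M[F]_(n, m)) :
  (#|[set T : {set 'I_m} | (indrow F T <= A)%MS]| <= 2 ^ \rank A)%N.
Proof.
set X := [set T | _]; pose B := row_base A; pose f := maxrankfun B^T.
have freeB : row_free (colsub f B).
  rewrite /row_free -mxrank_tr trmx_mxsub.
  have := maxrowsub_free B^T; rewrite /row_free => /eqP ->.
  by rewrite mxrank_tr eq_row_base.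
pose g (T : {set 'I_m}) := [set i | f i \in T].
have g_inj : {in X &, injective g}.
  move=> T1 T2; rewrite !inE -(eq_row_base A) => /submxP[c1 E1].
  rewrite -(eq_row_base A) => /submxP[c2 E2] Eg.
  apply: (@indrow_inj F); rewrite E1 E2; suff -> : c1 = c2 by [].
  apply: (row_free_inj freeB); rewrite !mulmx_colsub -E1 -E2.
  by apply/rowP => i; rewrite !mxE; move/setP: Eg => /(_ i); rewrite !inE => ->.
suff: (#|X| <= 2 ^ \rank B^T)%N by rewrite mxrank_tr eq_row_base.
rewrite -(card_in_imset g_inj) -[X in (2 ^ X)%N]card_ord.
rewrite -cardsT -card_powerset; apply: subset_leq_card; apply/subsetP => T _.
by rewrite powersetE subsetT.
Qed.

Lemma linear_span_lker (K : fieldType) (vT wT : vectType K) (A : vT -> Prop)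
    (U : {vspace vT}) (f : 'Hom(vT, wT)) :
  is_linear_span A U -> (forall v, A v -> f v = 0) -> (U <= lker f)%VS.
Proof. by move=> [_ spanU] Af0; apply: spanU => v /Af0 fv0; rewrite memv_ker fv0. Qed.

Section BasisMatrix.
Variables (F : fieldType) (m : nat) (U : {vspace 'rV[F]_m}).

Definition vbasis_mx : 'M[F]_(\dim U, m) := \matrix_i tnth (vbasis U) i.

Lemma vbasis_mx_free : row_free vbasis_mx.
Proof.
apply: inj_row_free => w; rewrite mulmx_sum_row => w0; apply/rowP => i.
have /freeP/(_ (fun j => w 0 j)) := basis_free (vbasisP U); rewrite mxE; apply.
by rewrite -[RHS]w0; apply: eq_bigr => j _; rewrite rowK (tnth_nth 0).
Qed.

Lemma mulmx_vbasis_mx_eq0 p (B : 'M[F]_(m, p)) :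
  (forall v, v \in U -> v *m B = 0) -> vbasis_mx *m B = 0.
Proof.
move=> UB0; apply/row_matrixP => i; rewrite row_mul rowK row0.
by apply/UB0/vbasis_mem/mem_tnth.
Qed.

End BasisMatrix.

Lemma card_classes_double m (Z : {set {set 'I_m.+1}}) (Cs : {set {set {set 'I_m.+1}}}) :
  Cs \subset Mr m.+1 -> (forall C, C \in Cs -> C \subset Z) -> (#|Cs|.*2 <= #|Z|)%N.
Proof.
(* Each class has a unique representative containing [ord0]; these form [Z0],
   and their complements form a disjoint copy of [Z0] inside [Z]. *)
move=> CsMr CsZ; pose Z0 := [set T in Z | (ord0 \in T) && (~: T \in Z)].
have CsZ0 : Cs \subset @mclass m.+1 @: Z0.
  apply/subsetP => C CsC; have /imsetP[T _ defC] := subsetP CsMr C CsC.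
  have /subsetP := CsZ C CsC; rewrite defC => CZ.
  have ZT : T \in Z by apply: CZ; rewrite !inE eqxx.
  have ZTc : ~: T \in Z by apply: CZ; rewrite !inE eqxx orbT.
  have [T0|T0] := boolP (ord0 \in T).
    by apply/imsetP; exists T; rewrite // inE ZT T0 ZTc.
  apply/imsetP; exists (~: T); first by rewrite inE ZTc inE T0 setCK ZT.
  by rewrite /mclass setCK; apply/setP => x; rewrite !inE orbC.
have Z0cZ : @setC _ @: Z0 \subset Z :\: Z0.
  apply/subsetP => _ /imsetP[T + ->]; rewrite !inE => /and3P[_ T0 ->].
  by rewrite T0 andbF.
rewrite -addnn -(cardsID Z0 Z) (setIidPr _); last first.
  by apply/subsetP => T; rewrite inE => /andP[].
have leCsZ0 : (#|Cs| <= #|Z0|)%N.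
  exact: leq_trans (subset_leq_card CsZ0) (leq_imset_card _ _).
apply: leq_add leCsZ0 (leq_trans leCsZ0 _).
by rewrite -(card_imset Z0 (@setC_inj _)); apply: subset_leq_card.
Qed.

Lemma kerMstar_class_mem (R : realType) r (S : {set {set {set 'I_r}}}) (k : 'rV[R]_r.-1)
    (C : {set {set 'I_r}}) :
  S \subset Mr r -> kerMstar S k -> C \in Mr r -> class_zero k C -> C \in S.
Proof.
move=> SMr /andP[kerSk maxS] MrC kC; apply/negPn/negP => SC; apply: (negP maxS).
apply/existsP; exists (C |: S); rewrite subUset sub1set MrC SMr properUr ?sub1set //=.
apply/forallP => C'; apply/implyP; rewrite !inE => /orP[/eqP -> // | SC'].
by move/forallP: kerSk => /(_ C') /implyP; apply.
Qed.

Section Differences.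
Variables (R : realType) (n : nat).
Implicit Types (v : 'rV[R]_n.+1) (T : {set 'I_n.+2}).
Local Notation kcoord := (@kcoord R n.+2).
Local Notation kS := (@kS R n.+2).
Local Notation class_zero := (@class_zero R n.+2).
Local Notation kerMstar := (@kerMstar R n.+2).
Local Notation alpha := (@alpha R n.+2).

Lemma kcoordE v j : kcoord v j = \sum_i v 0 i * kcoord (delta_mx 0 i) j.
Proof.
case: j => [|j] /=; first by rewrite big1 // => i _; rewrite mulr0.
case: insubP => [i _ _|_]; last by rewrite big1 // => i _; rewrite mulr0.
by rewrite {1}(row_sum_delta v) summxE; apply: eq_bigr => l _; rewrite mxE.
Qed.

Definition diffmx : 'M[R]_(n.+1, n.+2) :=
  \matrix_(i, j) (kcoord (delta_mx 0 i) j.+1 - kcoord (delta_mx 0 i) j).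

Lemma diffmxE v (j : 'I_n.+2) : (v *m diffmx) 0 j = kcoord v j.+1 - kcoord v j.
Proof.
rewrite mxE (kcoordE v j.+1) (kcoordE v j) -sumrB; apply: eq_bigr => i _.
by rewrite mxE mulrBr.
Qed.

Lemma kS_mulmx v T : kS v T = (v *m diffmx *m (indrow R T)^T) 0 0.
Proof.
rewrite /Defs.kS mxE big_mkcond /=; apply: eq_bigr => j _.
by rewrite diffmxE !mxE; case: (j \in T); rewrite ?mulr1 ?mulr0.
Qed.

Lemma kS_setT v : kS v setT = 0.
Proof.
rewrite /Defs.kS (eq_bigl xpredT) => [|j]; last by rewrite inE.
rewrite -(big_mkord xpredT (fun j => kcoord v j.+1 - kcoord v j)) telescope_sumr //.
by rewrite /= insubN ?ltnn // subrr.
Qed.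

Lemma kS_setC v T : kS v (~: T) = - kS v T.
Proof.
have := kS_setT v; rewrite /Defs.kS (big_setID T) /= setTI setTD.
by move/eqP; rewrite addr_eq0 => /eqP ->; rewrite opprK.
Qed.

Lemma class_zero_mclass v T0 T :
  class_zero v (mclass T0) -> T \in mclass T0 -> kS v T = 0.
Proof.
have kS0 T' : T' \in mclass T0 -> kS v T' = 0 -> kS v T0 = 0.
  by rewrite !inE => /orP[]/eqP-> //; rewrite kS_setC => /eqP; rewrite oppr_eq0 => /eqP.
case/existsP => T' /andP[T0T' /eqP/(kS0 _ T0T') vT0].
by rewrite !inE => /orP[]/eqP->; rewrite ?kS_setC vT0 ?oppr0.
Qed.

Lemma diffmx_free : row_free diffmx.
Proof.
apply: inj_row_free => v v0.
have step j : (j < n.+2)%N -> kcoord v j.+1 = kcoord v j.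
  by move=> ltj; apply/eqP; rewrite -subr_eq0 -(diffmxE v (Ordinal ltj)) v0 mxE.
have zero j : (j <= n.+2)%N -> kcoord v j = 0.
  by elim: j => [//|j IHj] ltj; rewrite step // IHj // ltnW.
by apply/rowP => i; rewrite mxE -(zero i.+1 (leqW (ltn_ord i))) /= valK.
Qed.

Lemma kS_mulmx_eq0 v T : (v *m (diffmx *m (indrow R T)^T) == 0) = (kS v T == 0).
Proof.
apply/eqP/eqP => [v0 | vT0]; first by rewrite kS_mulmx -mulmxA v0 mxE.
by apply/rowP => i; rewrite ord1 mulmxA -kS_mulmx vT0 mxE.
Qed.

Lemma indrow_sub_kermx (V : {vspace 'rV[R]_n.+1}) T :
  (forall u, u \in V -> kS u T = 0) -> (indrow R T <= kermx (vbasis_mx V *m diffmx)^T)%MS.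
Proof.
move=> VT0; apply/sub_kermxP/trmx_inj; rewrite trmx_mul trmxK trmx0 -mulmxA.
by apply: mulmx_vbasis_mx_eq0 => u /VT0/eqP; rewrite -(kS_mulmx_eq0 u T) => /eqP.
Qed.

Lemma span_kerMstar_kS_eq0 (S : {set {set {set 'I_n.+2}}}) (V : {vspace 'rV[R]_n.+1})
    v C T :
  S \subset Mr n.+2 -> is_linear_span (kerMstar S) V -> kerMstar S v ->
  C \in Mr n.+2 -> class_zero v C -> T \in C -> forall u, u \in V -> kS u T = 0.
Proof.
move=> SMr spanV Sv MrC vC CT; have SC := kerMstar_class_mem SMr Sv MrC vC.
have /imsetP[T0 _ defC] := MrC; rewrite defC in CT.
pose f := linfun (@mulmxr _ 1 _ _ (diffmx *m (indrow R T)^T)).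
have Sf0 u : kerMstar S u -> f u = 0.
  case/andP=> /forallP/(_ C)/implyP/(_ SC); rewrite defC => uC _.
  by apply/eqP; rewrite lfunE kS_mulmx_eq0 (class_zero_mclass uC CT).
move=> u /(subvP (linear_span_lker spanV Sf0)).
by rewrite memv_ker lfunE kS_mulmx_eq0 => /eqP.
Qed.

Lemma alpha_le_expn (S : {set {set {set 'I_n.+2}}}) (V : {vspace 'rV[R]_n.+1}) v :
    S \subset Mr n.+2 -> is_linear_span (kerMstar S) V -> kerMstar S v ->
  (alpha v <= 2 ^ (n.+2 - \dim V - 1))%N.
Proof.
move=> SMr spanV Sv; pose N := vbasis_mx V *m diffmx.
pose Z := [set T : {set 'I_n.+2} | (indrow R T <= kermx N^T)%MS].
have cardZ : (#|Z| <= 2 ^ (n.+2 - \dim V))%N.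
  have := card_indrow_submx (kermx N^T).
  by rewrite mxrank_ker mxrank_tr mxrankMfree ?diffmx_free // (eqP (vbasis_mx_free V)).
pose Cs := [set C in Mr n.+2 | class_zero v C].
change (#|Cs| <= 2 ^ (n.+2 - \dim V - 1))%N.
have /card_classes_double CsZ : Cs \subset Mr n.+2.
  by apply/subsetP => C; rewrite inE => /andP[].
have {CsZ} : (#|Cs|.*2 <= #|Z|)%N.
  apply: CsZ => C; rewrite inE => /andP[MrC vC]; apply/subsetP => T CT.
  by rewrite inE; apply/indrow_sub_kermx/(span_kerMstar_kS_eq0 SMr spanV Sv MrC vC CT).
by move: cardZ; case: (n.+2 - \dim V)%N => [|e]; rewrite ?sub0n ?subSS ?subn0 ?expnS; lia.
Qed.

End Differences.

Theorem mainTheorem8 (R : realType) (r : nat) (hr : (2 <= r)%N)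
  (S : {set {set {set 'I_r}}}) (hS : S \subset Mr r)
  (hne : exists k : 'rV[R]_(r.-1), kerMstar S k)
  (V : {vspace 'rV[R]_(r.-1)})
  (hV : is_linear_span (fun k : 'rV[R]_(r.-1) => kerMstar S k) V) :
  forall k : 'rV[R]_(r.-1), kerMstar S k ->
    (forall i : 'I_(r.-1), k ord0 i \is a Num.int) ->
    (alpha k <= 2 ^ (r - \dim V - 1))%N.
Proof.
case: r hr S hS hne V hV => [|[|n]] // _ S SMr _ V spanV k Sk _.
exact: alpha_le_expn SMr spanV Sk.
Qed.
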